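(* Let $\mathcal F\subseteq\binom{[n]}{k}$ be a left-compressed $t$-intersecting family, let $g(\mathcal F)\in G_*(\mathcal F)$ and $s=s^+(g(\mathcal F))$. Suppose $g^*_i(\mathcal F)\ne\emptyset$, let $j=s+t-i\ne i$, and let $\mathcal F_1=\mathcal F\cup\mathscr D(g^*_i(\mathcal F)')\setminus\mathscr D(g^*_j(\mathcal F))$. Then \begin{align*} \zeta_{k-1}(\mathcal F_1)-\zeta_{k-1}(\mathcal F)\ \ge\ & |g^*_i(\mathcal F)|\binom{n-s}{k-i}\binom{n-s-k+i}{2}+\zeta_{i-1,s}(g^*_i(\mathcal F),\mathcal F|_{[s]})\binom{n-s}{k-i+1}\\ &+|g^*_i(\mathcal F)|(s-i+1)(k-i+1)\binom{n-s}{k-i+1}-|g^*_j(\mathcal F)|\binom{n-s}{k-j-1}\binom{n-s-k+j+1}{2}\\ &-\zeta_{j-1,s}(g^*_j(\mathcal F),\mathcal F|_{[s]})\binom{n-s}{k-j}-|g^*_j(\mathcal F)|(s-j)(k-j+1)\binom{n-s}{k-j}. \end{align*}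
   Context: $[m]=\{1,\dots,m\}$, $[a,b]=\{a,\dots,b\}$. A family is $t$-intersecting if any two members share at least $t$ elements; left-compressed means invariant under all shifts $\Delta_{ij}$, $1\le i<j\le n$, where $\delta_{ij}(A)=(A\setminus\{j\})\cup\{i\}$ if $j\in A$, $i\notin A$, $(A\setminus\{j\})\cup\{i\}\notin\mathcal F$, else $\delta_{ij}(A)=A$, and $\Delta_{ij}(\mathcal F)=\{\delta_{ij}(A):A\in\mathcal F\}$. Generating sets: for $E\subseteq[n]$, $\mathcal U(E)=\{A\subseteq[n]:E\subseteq A\}$, $s^+(E)=\max E$; for a family $\mathcal E$, $\mathcal U(\mathcal E)=\bigcup_{E\in\mathcal E}\mathcal U(E)$ and $s^+(\mathcal E)=\max_{E\in\mathcal E}s^+(E)$. A family $g(\mathcal F)\subseteq\bigcup_{i\le k}\binom{[n]}{i}$ is a generating set of $\mathcal F$ if $\mathcal U(g(\mathcal F))\cap\binom{[n]}{k}=\mathcal F$; $G(\mathcal F)$ is the set of all generating sets. Let $s=\min\{s^+(g):g\in G(\mathcal F)\}$, and $G_*(\mathcal F)$ the set of $g\in G(\mathcal F)$ such that $g$ equals its set of inclusion-minimal elements (an antichain) and $s^+(g)=s$. Put $\mathcal F|_{[s]}=\{F\cap[s]:F\in\mathcal F\}$. For $g(\mathcal F)\in G_*(\mathcal F)$: $g^*(\mathcal F)=\{E\in g(\mathcal F):s\in E\}$, $g^*_i(\mathcal F)=\{E\in g^*(\mathcal F):|E|=i\}$, $g^*_i(\mathcal F)'=\{E\setminus\{s\}:E\in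 g^*_i(\mathcal F)\}$. For $E\subseteq[n]$, $\mathscr D(E)=\{B\in\binom{[n]}{k}: B\cap[s^+(E)]=E\}$, and $\mathscr D(\mathcal E)=\bigcup_{E\in\mathcal E}\mathscr D(E)$. For families $\mathcal F,\mathcal G\subseteq 2^{[n]}$ and integers $u,v$: $\zeta_u(\mathcal F,\mathcal G)$ is the number of unordered pairs $\{F,G\}$ with $F\in\mathcal F$, $G\in\mathcal G$, $|F|=|G|=u+1$, $|F\cap G|=u$; $\zeta_{u,v}(\mathcal F,\mathcal G)$ counts those pairs with additionally $v\in F\cap G$; $\zeta_u(\mathcal F)=\zeta_u(\mathcal F,\mathcal F)$. In particular $\zeta_{k-1}(\mathcal F)$ is the number of unordered pairs of members of $\mathcal F$ meeting in $k-1$ elements. *)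

(* Ground set [n] = {1,...,n} is modelled by 'I_n, the
   ordinal x : 'I_n standing for the integer x+1 (see [lab]). *)
From mathcomp Require Import all_boot all_order all_algebra.
Set Implicit Arguments. Unset Strict Implicit. Unset Printing Implicit Defensive.

Section Defs.
Variable n : nat.
Local Notation fam := {set {set 'I_n}}.

Definition lab (x : 'I_n) : nat := x.+1.

Definition initseg (m : nat) : {set 'I_n} := [set x | lab x <= m].

Definition memlab (v : nat) (E : {set 'I_n}) : bool := [exists x in E, lab x == v].

Definition uniform (k : nat) (F : fam) : Prop := forall A, A \in F -> #|A| = k.

Definition t_intersecting (t : nat) (F : fam) : Prop :=
  forall A B, A \in F -> B \in F -> t <= #|A :&: B|.

Definition delta (F : fam) (i j : 'I_n) (A : {set 'I_n}) : {set 'I_n} :=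
  if [&& j \in A, i \notin A & ((A :\ j) :|: [set i]) \notin F]
  then (A :\ j) :|: [set i] else A.

Definition Delta (i j : 'I_n) (F : fam) : fam := [set delta F i j A | A in F].

Definition left_compressed (F : fam) : Prop :=
  forall i j : 'I_n, i < j -> Delta i j F = F.

(* s^+(E) = max E (0 for the empty set) *)
Definition splus (E : {set 'I_n}) : nat := \max_(x in E) lab x.
Definition splusF (G : fam) : nat := \max_(E in G) splus E.

Definition upk (k : nat) (G : fam) : fam :=
  [set A : {set 'I_n} | (#|A| == k) && [exists E in G, E \subset A]].

Definition is_gen (k : nat) (F G : fam) : Prop :=
  (forall E, E \in G -> #|E| <= k) /\ upk k G = F.

Definition minimal_elts (G : fam) : fam :=
  [set E in G | [forall E' in G, (E' \subset E) ==> (E' == E)]].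

Definition in_Gstar (k : nat) (F G : fam) : Prop :=
  is_gen k F G /\ G = minimal_elts G /\
  (forall G', is_gen k F G' -> splusF G <= splusF G').

Definition gstar_i (G : fam) (i : nat) : fam :=
  [set E in G | memlab (splusF G) E && (#|E| == i)].

Definition gstar_i' (G : fam) (i : nat) : fam :=
  [set E :\: [set x | lab x == splusF G] | E in gstar_i G i].

Definition restr (F : fam) (s : nat) : fam := [set A :&: initseg s | A in F].

Definition Dset (k : nat) (E : {set 'I_n}) : fam :=
  [set B : {set 'I_n} | (#|B| == k) && (B :&: initseg (splus E) == E)].
Definition DsetF (k : nat) (G : fam) : fam := \bigcup_(E in G) Dset k E.

Definition zeta (u : nat) (F G : fam) : nat :=
  #|[set P : {set {set 'I_n}} | [exists A in F, exists B in G,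
      [&& P == [set A; B], #|A| == u.+1, #|B| == u.+1 & #|A :&: B| == u]]]|.

Definition zetav (u v : nat) (F G : fam) : nat :=
  #|[set P : {set {set 'I_n}} | [exists A in F, exists B in G,
      [&& P == [set A; B], #|A| == u.+1, #|B| == u.+1, #|A :&: B| == u
        & memlab v (A :&: B)]]]|.
End Defs.

(* binomial coefficient with integer lower index (0 if negative) *)
Definition binz (m : nat) (r : int) : nat :=
  match r with Posz r' => 'C(m, r') | Negz _ => 0 end.

(* Let s = s^+(g) and split [n] into the low part [s] and the high part above it; sets are
   studied through their traces on [s].  With R = D(g^*_j), ζ(F1) - ζ(F) is the number of
   adjacent pairs of F1 not inside F \ R minus the number of those of F, so it suffices to
   bound the former (gains) from below and the latter (losses) from above.  For E ∈ g^*_i and Y high, the set (E \ {s}) ∪ Y is new: it is not in F, since a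
   generator inside it would be a proper subset of E.  New sets produce three disjoint
   injective families of gained pairs: twins (two new sets differing in one high point),
   swaps (a new set together with the set obtained by exchanging a high point for a low
   point outside E \ {s}, which is in F by left-compression), and lifts of the trace pairs
   counted by ζ_{i-1,s}(g^*_i, F|_[s]) by a common high part.  Their traces on [s] tell
   them apart, and counting them gives the three positive terms.  A lost pair {A, A - u + v} has A ∈ R, so E = A ∩ [s] ∈ g^*_j.  Moving a low u
   to a high v is impossible (B would contain a generator strictly inside E); the other
   cases make the pair a twin (u, v high), a swap (u high or u = s, v low) or a lift
   (u ≠ s low, v low) built on E, which gives the three negative terms. *)

From mathcomp Require Import all_boot all_order all_algebra.
From mathcomp Require Import zify.
Import GRing.Theory Num.Theory.
Import Order.TTheory.
Set Implicit Arguments. Unset Strict Implicit. Unset Printing Implicit Defensive.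

Lemma card_pairs_const (T1 T2 : finType) (P : pred T1) (Q : T1 -> pred T2) c :
  (forall a, P a -> #|[set b | Q a b]| = c) ->
  #|[set x : T1 * T2 | P x.1 && Q x.1 x.2]| = #|P| * c.
Proof.
move=> hQ; rewrite -sum1_card (eq_bigl (fun x : T1 * T2 => P x.1 && Q x.1 x.2)); last first.
  by move=> x; rewrite inE.
rewrite -(pair_big_dep P Q (fun _ _ => 1)) /= -sum_nat_const.
apply: eq_big => // a Pa; rewrite -(hQ a Pa) -sum1_card; apply: eq_bigl => b; by rewrite inE.
Qed.

Lemma card_ord_lt n m : m <= n -> #|[set x : 'I_n | x < m]| = m.
Proof.
move=> le_mn; have widen_inj : injective (widen_ord le_mn).
  by move=> x y e; apply: val_inj; exact: (congr1 val e).
have -> : [set x : 'I_n | x < m] = [set widen_ord le_mn y | y in 'I_m].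
  apply/setP=> x; rewrite inE; apply/idP/imsetP => [lt_xm|[y _ ->]]; last by rewrite /= ltn_ord.
  by exists (Ordinal lt_xm) => //; apply: val_inj.
by rewrite (card_imset _ widen_inj) card_ord.
Qed.

Lemma imset_set2 (T1 T2 : finType) (f : T1 -> T2) a b : f @: [set a; b] = [set f a; f b].
Proof. by rewrite imsetU1 imset_set1. Qed.

Lemma ler_subz_add2l (a x y m p : nat) : m <= x -> y <= p ->
  (m%:Z - p%:Z <= (a + x)%:Z - (a + y)%:Z)%R.
Proof. lia. Qed.

Lemma binz_nat m r : binz m (Posz r) = 'C(m, r).
Proof. by []. Qed.

Lemma bin_mul_bin_subn m a b : a <= b ->
  'C(m, b - a) * 'C(m - (b - a), 2) = 'C(m, b - a) * 'C(m + a - b, 2).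
Proof.
move=> le_ab; case: (leqP (b - a) m) => [le_m|lt_m]; last by rewrite bin_small.
by congr (_ * 'C(_, _)); lia.
Qed.

Section SetSurgery.
Variable T : finType.
Implicit Types (A B K : {set T}) (a u v d : T).

Lemma cardsU_setI0 A B : A :&: B = set0 -> #|A :|: B| = #|A| + #|B|.
Proof. by move=> h; rewrite cardsU h cards0 subn0. Qed.

Lemma bigcap_set2 A B : \bigcap_(X in [set A; B]) X = A :&: B.
Proof. by rewrite bigcap_setU !big_set1. Qed.

Lemma bigcup_set2 A B : \bigcup_(X in [set A; B]) X = A :|: B.
Proof. by rewrite bigcup_setU !big_set1. Qed.

Lemma setD1_notin a A : a \notin A -> A :\ a = A.
Proof. by move=> aA; apply/setDidPl; rewrite disjoint_sym disjoints1. Qed.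

Lemma setD1_inj a A B : a \in A -> a \in B -> A :\ a = B :\ a -> A = B.
Proof. by move=> aA aB e; rewrite -(setD1K aA) -(setD1K aB) e. Qed.

Lemma cardsD1_in a A : a \in A -> #|A :\ a| = #|A|.-1.
Proof. by move=> aA; rewrite (cardsD1 a A) aA. Qed.

Lemma cardsU1_notin a A : a \notin A -> #|A :|: [set a]| = #|A|.+1.
Proof. by move=> aA; rewrite setUC cardsU1 aA. Qed.

Lemma cards_swap A u v : u \in A -> v \notin A -> #|A :\ u :|: [set v]| = #|A|.
Proof.
move=> uA vA; rewrite cardsU1_notin; last by rewrite !inE negb_and vA orbT.
by rewrite (cardsD1 u A) uA.
Qed.

Lemma setI_swap A u v : v \notin A -> A :&: (A :\ u :|: [set v]) = A :\ u.
Proof.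
move=> vA; apply/setP=> y; rewrite !inE.
case: (y =P v) => [->|_]; first by rewrite (negbTE vA) andbF.
by rewrite orbF; case: (y \in A); rewrite ?andbT ?andbF.
Qed.

Lemma swap_inj A u1 v1 u2 v2 : u1 \in A -> u2 \in A -> v1 \notin A -> v2 \notin A ->
  A :\ u1 :|: [set v1] = A :\ u2 :|: [set v2] -> u1 = u2 /\ v1 = v2.
Proof.
move=> u1A u2A v1A v2A e.
have ev : v1 = v2.
  have : v1 \in A :\ u2 :|: [set v2] by rewrite -e !inE eqxx orbT.
  by rewrite !inE => /orP [/andP [_ h]|/eqP //]; rewrite h in v1A.
split=> //; apply/eqP/negPn/negP=> ne_u.
have : u1 \in A :\ u1 :|: [set v1] by rewrite e !inE ne_u u1A.
by rewrite !inE eqxx /= => /eqP e1; move: v1A; rewrite -e1 u1A.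
Qed.

Lemma setIU1 K d1 d2 : d1 != d2 -> (K :|: [set d1]) :&: (K :|: [set d2]) = K.
Proof.
move=> ne_d; apply/setP=> y; rewrite !inE.
by case: (y \in K) => //=; case: (y =P d1) => // ->; rewrite (negbTE ne_d).
Qed.

Lemma setUU1D K d1 d2 : d1 \notin K -> d2 \notin K ->
  ((K :|: [set d1]) :|: (K :|: [set d2])) :\: K = [set d1; d2].
Proof.
move=> d1K d2K; apply/setP=> y; rewrite !inE.
case yK: (y \in K) => //=; apply/esym/negbTE.
by apply/orP=> [[]] /eqP e; [move: d1K|move: d2K]; rewrite -e yK.
Qed.

Lemma eq_set2_sep (h : {set T} -> nat) A1 B1 A2 B2 :
  [set A1; B1] = [set A2; B2] -> h A1 = h A2 -> h B1 = h B2 -> h A1 != h B1 ->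
  A1 = A2 /\ B1 = B2.
Proof.
move=> e hA hB /eqP ne_h.
have : A1 \in [set A2; B2] by rewrite -e !inE eqxx.
have : B1 \in [set A2; B2] by rewrite -e !inE eqxx orbT.
rewrite !inE => /orP [/eqP eB|/eqP eB] /orP [/eqP eA|/eqP eA];
  first [by [] | exfalso; apply: ne_h; first [by rewrite hA eB | by rewrite eA eB]].
Qed.

Lemma adjacent_swap m A B : #|A| = m.+1 -> #|B| = m.+1 -> #|A :&: B| = m ->
  exists u v, [/\ u \in A, u \notin B, v \in B, v \notin A & B = A :\ u :|: [set v]].
Proof.
move=> cA cB cAB.
have /cards1P [u eu] : #|A :\: B| == 1 by rewrite cardsD cA cAB subSnn.
have /cards1P [v ev] : #|B :\: A| == 1 by rewrite cardsD cB setIC cAB subSnn.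
have := set11 u; rewrite -eu inE => /andP [uB uA].
have := set11 v; rewrite -ev inE => /andP [vA vB].
exists u, v; split=> //; apply/setP=> y; rewrite in_setU in_setD1 in_set1.
have yAB : (y \in A :\: B) = (y == u) by rewrite eu inE.
have yBA : (y \in B :\: A) = (y == v) by rewrite ev inE.
move: yAB yBA; rewrite !inE.
case yA: (y \in A); case yB: (y \in B) => /= <- <- //=; by rewrite ?andbF.
Qed.
End SetSurgery.

Section Traces.
Variable n : nat.
Implicit Types (A B E X Y Z : {set 'I_n}) (G : {set {set 'I_n}}).

Lemma lab_inj : injective (@lab n).
Proof. by move=> a b [] /val_inj. Qed.

Lemma splus_ub E x : x \in E -> lab x <= splus E.
Proof. exact: leq_bigmax_cond. Qed.

Lemma splus_le E m : E \subset initseg n m -> splus E <= m.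
Proof. by move=> sEm; apply/bigmax_leqP=> x /(subsetP sEm); rewrite inE. Qed.

Variable sx : 'I_n.
Local Notation s := (lab sx).
Local Notation low := (initseg n (lab sx)).
Local Notation high := (~: initseg n (lab sx)).

Lemma in_low x : (x \in low) = (x <= sx).
Proof. by rewrite inE /lab ltnS. Qed.

Lemma low_high_disj x : x \in low -> x \in high -> False.
Proof. by move=> xl; rewrite in_setC xl. Qed.

Lemma memlab_lab E : memlab s E = (sx \in E).
Proof.
apply/existsP/idP => [[x /andP [xE /eqP /lab_inj <-]] //|sE].
by exists sx; rewrite sE eqxx.
Qed.

Lemma lab_eq_set1 : [set x : 'I_n | lab x == s] = [set sx].
Proof. by apply/setP=> x; rewrite !inE; apply/eqP/eqP=> [/lab_inj|->]. Qed.

Section LowHigh.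
Variables (E Y : {set 'I_n}).
Hypotheses (sE : E \subset low) (sY : Y \subset high).

Lemma setUI_low : (E :|: Y) :&: low = E.
Proof.
apply/setP=> y; rewrite in_setI in_setU.
case yE: (y \in E); first by rewrite (subsetP sE y yE).
by case yY: (y \in Y) => //=; have := subsetP sY y yY; rewrite inE => /negbTE.
Qed.

Lemma setUI_high : (E :|: Y) :&: high = Y.
Proof.
apply/setP=> y; rewrite in_setI in_setU.
case yY: (y \in Y); first by rewrite (subsetP sY y yY) orbT.
by case yE: (y \in E) => //=; rewrite inE (subsetP sE y yE).
Qed.

Lemma cardsU_low_high : #|E :|: Y| = #|E| + #|Y|.
Proof.
apply: cardsU_setI0; apply/setP=> y; rewrite in_setI in_set0.
by apply/andP=> [[/(subsetP sE) yl /(subsetP sY)]]; apply: low_high_disj.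
Qed.
End LowHigh.

Lemma low_high_split A : A = (A :&: low) :|: (A :&: high).
Proof. by rewrite -setIUr setUCr setIT. Qed.

Lemma card_low : #|low| = s.
Proof.
rewrite (_ : low = [set x : 'I_n | x < s]); last by apply/setP=> x; rewrite in_low [RHS]inE.
exact: card_ord_lt (ltn_ord sx).
Qed.

Lemma card_high : #|high| = n - s.
Proof. by rewrite cardsCs setCK card_low card_ord. Qed.

Definition high_sets q := [set Y : {set 'I_n} | (Y \subset high) && (#|Y| == q)].

Lemma card_high_sets q : #|high_sets q| = 'C(n - s, q).
Proof. by rewrite cards_draws card_high. Qed.

(* The three kinds of pairs at distance one, each given by an index and a map [c] sending a
   generator to the low part of the pair ([c E = E :\ sx] for gained pairs, [c = id] for
   lost ones).  A twin index (E, (Z, D)) with Z high and D two further high points gives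
   {c E ∪ Z ∪ {d} | d ∈ D}; a swap index ((E, Y), (u, v)) gives c E ∪ Y together with the
   set obtained from it by replacing u with v; a lift index (P, Y) adds the common high
   part Y to both members of the pair P of low sets. *)
Definition twin_index G p :=
  [set x : {set 'I_n} * ({set 'I_n} * {set 'I_n}) |
     (x.1 \in G) && ((x.2.1 \in high_sets p) &&
                     ((x.2.2 \subset high :\: x.2.1) && (#|x.2.2| == 2)))].

Definition swap_index G q (U : {set 'I_n} -> {set 'I_n} -> {set 'I_n})
    (V : {set 'I_n} -> {set 'I_n}) :=
  [set x : ({set 'I_n} * {set 'I_n}) * ('I_n * 'I_n) |
     ((x.1.1 \in G) && (x.1.2 \in high_sets q)) &&
     ((x.2.1 \in U x.1.1 x.1.2) && (x.2.2 \in V x.1.1))].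

Definition lift_index (Ps : {set {set {set 'I_n}}}) q := setX Ps (high_sets q).

Definition twin_pair (c : {set 'I_n} -> {set 'I_n})
    (x : {set 'I_n} * ({set 'I_n} * {set 'I_n})) : {set {set 'I_n}} :=
  [set c x.1 :|: x.2.1 :|: [set d] | d in x.2.2].

Definition swap_pair (c : {set 'I_n} -> {set 'I_n})
    (x : ({set 'I_n} * {set 'I_n}) * ('I_n * 'I_n)) : {set {set 'I_n}} :=
  [set c x.1.1 :|: x.1.2; (c x.1.1 :|: x.1.2) :\ x.2.1 :|: [set x.2.2]].

Definition lift_pair (c : {set 'I_n} -> {set 'I_n})
    (x : {set {set 'I_n}} * {set 'I_n}) : {set {set 'I_n}} :=
  [set c X :|: x.2 | X in x.1].

Lemma card_twin_index G p : #|twin_index G p| = #|G| * ('C(n - s, p) * 'C(n - s - p, 2)).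
Proof.
rewrite (card_pairs_const (P := fun E => E \in G)
   (Q := fun _ (y : {set 'I_n} * {set 'I_n}) =>
           (y.1 \in high_sets p) && ((y.2 \subset high :\: y.1) && (#|y.2| == 2)))
   (c := 'C(n - s, p) * 'C(n - s - p, 2))); first by rewrite cardE.
move=> E _; rewrite (card_pairs_const (P := fun Z => Z \in high_sets p)
   (Q := fun Z (D : {set 'I_n}) => (D \subset high :\: Z) && (#|D| == 2))
   (c := 'C(n - s - p, 2))); first by rewrite -card_high_sets cardE.
move=> Z; rewrite inE => /andP [sZ /eqP cZ].
by rewrite cards_draws cardsD card_high (setIidPr sZ) cZ.
Qed.

Lemma card_swap_index G q (U : {set 'I_n} -> {set 'I_n} -> {set 'I_n})
    (V : {set 'I_n} -> {set 'I_n}) cu cv :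
  (forall E Y, E \in G -> Y \in high_sets q -> #|U E Y| = cu) ->
  (forall E, E \in G -> #|V E| = cv) ->
  #|swap_index G q U V| = #|G| * 'C(n - s, q) * (cu * cv).
Proof.
move=> cU cV.
rewrite (card_pairs_const
   (P := fun x : {set 'I_n} * {set 'I_n} => (x.1 \in G) && (x.2 \in high_sets q))
   (Q := fun (x : {set 'I_n} * {set 'I_n}) (y : 'I_n * 'I_n) =>
           (y.1 \in U x.1 x.2) && (y.2 \in V x.1))
   (c := cu * cv)); last first.
  move=> [E Y] /andP [GE qY] /=; rewrite -(cU E Y GE qY) -(cV E GE) -cardsX.
  by apply: eq_card => y; rewrite !inE.
congr (_ * _); rewrite -[LHS]cardsE.
rewrite (card_pairs_const (P := fun E => E \in G)
   (Q := fun _ (Y : {set 'I_n}) => Y \in high_sets q) (c := 'C(n - s, q))); first by rewrite cardE.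
by move=> E _; rewrite -card_high_sets; apply: eq_card => Y; rewrite inE.
Qed.

Lemma card_lift_index (Ps : {set {set {set 'I_n}}}) q :
  #|lift_index Ps q| = #|Ps| * 'C(n - s, q).
Proof. by rewrite cardsX card_high_sets. Qed.

Definition adj_pairs u G := [set P : {set {set 'I_n}} |
  [exists A in G, exists B in G,
     [&& P == [set A; B], #|A| == u.+1, #|B| == u.+1 & #|A :&: B| == u]]].

Lemma zetaE u G : zeta u G G = #|adj_pairs u G|.
Proof. by []. Qed.

Lemma adj_pairs_in u G A B : A \in G -> B \in G -> #|A| = u.+1 -> #|B| = u.+1 ->
  #|A :&: B| = u -> [set A; B] \in adj_pairs u G.
Proof.
move=> GA GB cA cB cAB; rewrite inE; apply/exists_inP; exists A => //.
by apply/exists_inP; exists B; rewrite // cA cB cAB !eqxx.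
Qed.

Lemma adj_pairsP u G P : P \in adj_pairs u G -> exists A B,
  [/\ A \in G, B \in G, P = [set A; B], #|A| = u.+1 & #|B| = u.+1 /\ #|A :&: B| = u].
Proof.
rewrite inE => /exists_inP [A GA /exists_inP [B GB]].
by case/and4P=> /eqP eP /eqP cA /eqP cB /eqP cAB; exists A, B.
Qed.

Lemma adj_pairs_mem u G P A : P \in adj_pairs u G -> A \in P -> A \in G.
Proof. by case/adj_pairsP=> [B [C [GB GC -> _ _]]]; rewrite !inE => /orP [] /eqP ->. Qed.

Lemma adj_pairsS u G1 G2 : G1 \subset G2 -> adj_pairs u G1 \subset adj_pairs u G2.
Proof.
move=> sG12; apply/subsetP=> P /adj_pairsP [A [B [GA GB -> cA [cB cAB]]]].
by apply: adj_pairs_in => //; apply: (subsetP sG12).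
Qed.

Lemma swap_indexP G q (U : {set 'I_n} -> {set 'I_n} -> {set 'I_n})
    (V : {set 'I_n} -> {set 'I_n}) x :
  x \in swap_index G q U V -> exists E Y u v,
  [/\ x = ((E, Y), (u, v)), E \in G, Y \subset high, #|Y| = q & u \in U E Y /\ v \in V E].
Proof.
case: x => [[E Y] [u v]]; rewrite !inE /= => /andP [/andP [GE /andP [sY /eqP cY]] /andP [uU vV]].
by exists E, Y, u, v.
Qed.

Lemma twin_indexP G p x : x \in twin_index G p -> exists E Z d1 d2,
  [/\ x = (E, (Z, [set d1; d2])), E \in G, Z \subset high, #|Z| = p &
     [/\ d1 != d2, d1 \in high :\: Z & d2 \in high :\: Z]].
Proof.
case: x => E [Z D]; rewrite !inE /= => /andP [GE /andP [/andP [sZ /eqP cZ] /andP [sD cD]]].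
case/cards2P: cD => d1 [d2 [ne_d eD]]; exists E, Z, d1, d2; rewrite -eD.
by split=> //; split=> //; apply: (subsetP sD); rewrite eD !inE eqxx ?orbT.
Qed.

Section Family.
Variables (k : nat) (F g : {set {set 'I_n}}).
Hypothesis F_upk : forall A, (A \in F) = (#|A| == k) && [exists E in g, E \subset A].
Hypothesis g_antichain : forall E E', E \in g -> E' \in g -> E' \subset E -> E' = E.
Hypothesis g_low : forall E, E \in g -> E \subset low.
Hypothesis F_shift : forall A (a b : 'I_n),
  A \in F -> a < b -> b \in A -> a \notin A -> A :\ b :|: [set a] \in F.

Lemma mem_F E A : E \in g -> E \subset A -> #|A| = k -> A \in F.
Proof. by move=> gE sEA cA; rewrite F_upk cA eqxx; apply/exists_inP; exists E. Qed.

Lemma mem_F_gen A : A \in F -> #|A| = k /\ exists2 E, E \in g & E \subset A.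
Proof. by rewrite F_upk => /andP [/eqP -> /exists_inP [E gE sEA]]; split=> //; exists E. Qed.

Lemma g_setD1_low E a : E \in g -> E :\ a \subset low.
Proof. by move=> gE; apply: subset_trans (g_low gE); apply: subD1set. Qed.

(* Either X contains E0 itself, or X is the left shift of X - z + s, which contains E0. *)
Lemma mem_F_shifted_gen E0 z X : E0 \in g -> sx \in E0 -> z \in low -> z != sx ->
  z \notin E0 -> #|X| = k -> E0 :\ sx :|: [set z] \subset X -> X \in F.
Proof.
move=> gE0 sE0 zl z_s zE0 cX sub.
have zX : z \in X by apply: (subsetP sub); rewrite !inE eqxx orbT.
case sX: (sx \in X).
  apply: (mem_F gE0) => //; apply/subsetP=> e eE0.
  by case: (e =P sx) => [->|/eqP e_s] //; apply: (subsetP sub); rewrite !inE e_s eE0.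
set X' := X :\ z :|: [set sx].
have X'F : X' \in F.
  apply: (mem_F gE0); last by rewrite cards_swap ?sX.
  apply/subsetP=> e eE0; rewrite /X' !inE.
  case: (e =P sx) => [->|/eqP e_s]; first by rewrite orbT.
  have -> : e \in X by apply: (subsetP sub); rewrite !inE e_s eE0.
  by case: (e =P z) => [ez|] //; move: zE0; rewrite -ez eE0.
have lt_zs : z < sx by rewrite ltn_neqAle -in_low zl andbT; apply: contra z_s => /eqP/val_inj ->.
have sX' : sx \in X' by rewrite !inE eqxx orbT.
have zX' : z \notin X' by rewrite !inE eqxx (negbTE z_s).
have := F_shift X'F lt_zs sX' zX'.
suff -> : X' :\ sx :|: [set z] = X by [].
apply/setP=> e; rewrite !inE.
case: (e =P z) => [->|_]; first by rewrite zX orbT.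
by case: (e =P sx) => [->|_] /=; rewrite ?sX ?orbF ?andbF.
Qed.

Lemma setD1U_high_notin_F E Y : E \in g -> sx \in E -> Y \subset high -> E :\ sx :|: Y \notin F.
Proof.
move=> gE sE sY; apply/negP=> /mem_F_gen [_ [E0 gE0 sub]].
have sE0 : E0 \subset E :\ sx.
  apply/subsetP=> e eE0; have := subsetP sub e eE0; rewrite in_setU => /orP [] // eY.
  by case: (low_high_disj (subsetP (g_low gE0) e eE0) (subsetP sY e eY)).
have eE : E0 = E by apply: g_antichain => //; apply: subset_trans sE0 (subD1set _ _).
by move: sE0; rewrite eE => /subsetP /(_ sx sE); rewrite !inE eqxx.
Qed.

Hypothesis splusF_g : splusF g = s.

Definition gstar i := [set E in g | (sx \in E) && (#|E| == i)].

Lemma gstarP i E : E \in gstar i -> [/\ E \in g, sx \in E & #|E| = i].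
Proof. by rewrite inE => /andP [-> /andP [-> /eqP ->]]. Qed.

Lemma gstar_iE i : gstar_i g i = gstar i.
Proof. by apply/setP=> E; rewrite !inE splusF_g memlab_lab. Qed.

Lemma gstar_i'E i : gstar_i' g i = [set E :\ sx | E in gstar i].
Proof. by rewrite /gstar_i' gstar_iE splusF_g lab_eq_set1. Qed.

Lemma splus_gstar E : E \in g -> sx \in E -> splus E = s.
Proof. by move=> gE sE; apply/eqP; rewrite eqn_leq splus_le ?g_low ?splus_ub. Qed.

Lemma mem_DsetF_gstar j B :
  (B \in DsetF k (gstar j)) = (#|B| == k) && (B :&: low \in gstar j).
Proof.
apply/bigcupP/andP => [[E jE]|[cB jB]].
  have [gE sE _] := gstarP jE.
  by rewrite inE => /andP [cB /eqP tB]; split=> //; rewrite -(splus_gstar gE sE) tB.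
exists (B :&: low) => //; have [gE sE _] := gstarP jB.
by rewrite inE cB /= (splus_gstar gE sE).
Qed.

Lemma mem_DsetF_gstar' i E Y : E \in gstar i -> Y \subset high -> #|E :\ sx :|: Y| = k ->
  E :\ sx :|: Y \in DsetF k (gstar_i' g i).
Proof.
move=> iE sY cEY; apply/bigcupP; exists (E :\ sx); first by rewrite gstar_i'E; apply: imset_f.
have [gE sE _] := gstarP iE.
rewrite inE cEY eqxx /=; apply/eqP/setP=> y; rewrite in_setI in_setU.
case yE: (y \in E :\ sx) => /=; first by rewrite inE splus_ub.
case yY: (y \in Y) => //=; apply/negP; rewrite inE => le_y.
have := leq_trans le_y (splus_le (g_setD1_low _ gE)).
by have := subsetP sY y yY; rewrite !inE => /negbTE ->.
Qed.

Definition trace_pairs u G := [set P : {set {set 'I_n}} |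
  [exists A in G, exists B in restr F s,
     [&& P == [set A; B], #|A| == u.+1, #|B| == u.+1, #|A :&: B| == u
       & memlab s (A :&: B)]]].

Lemma zetavE u G : zetav u s G (restr F s) = #|trace_pairs u G|.
Proof. by []. Qed.

Lemma trace_pairsP u G P : P \in trace_pairs u G -> exists E E2 A0,
  [/\ P = [set E; E2], E \in G, A0 \in F, E2 = A0 :&: low &
    [/\ #|E| = u.+1, #|E2| = u.+1, #|E :&: E2| = u & sx \in E :&: E2]].
Proof.
rewrite inE => /exists_inP [E GE /exists_inP [E2 /imsetP [A0 FA0 eE2]]].
by case/and5P=> /eqP eP /eqP cE /eqP cE2 /eqP cEE2; rewrite memlab_lab; exists E, E2, A0.
Qed.

Lemma trace_pairs_mem u i P X : P \in trace_pairs u (gstar i) -> X \in P ->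
  X \subset low /\ sx \in X.
Proof.
case/trace_pairsP=> [E [E2 [A0 [-> /gstarP [gE _ _] _ eE2 [_ _ _]]]]].
rewrite in_setI => /andP [sE sE2].
by rewrite !inE => /orP [] /eqP ->; split=> //; [apply: g_low | rewrite eE2 subsetIr].
Qed.

Section Estimate.
Variables (i j : nat).
Hypothesis j_neq_i : j != i.
Hypotheses (i_gt0 : 0 < i) (i_le_k : i <= k).
Hypothesis g_card_le : forall E, E \in g -> #|E| <= k.

Local Notation lost := (DsetF k (gstar j)).
Local Notation F1 := ((F :|: DsetF k (gstar_i' g i)) :\: DsetF k (gstar j)).
Local Notation kept := (F :\: DsetF k (gstar j)).
Local Notation twins_i := (twin_index (gstar i) (k - i)).
Local Notation swaps_i :=
  (swap_index (gstar i) (k - i + 1) (fun _ Y => Y) (fun E => low :\: (E :\ sx))).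
Local Notation lifts_i := (lift_index (trace_pairs i.-1 (gstar i)) (k - i + 1)).

Lemma k_gt0 : 0 < k.
Proof. exact: leq_trans i_gt0 i_le_k. Qed.

Lemma notin_lost B : (sx \notin B :&: low) || (#|B :&: low| != j) -> B \notin lost.
Proof.
apply: contraL; rewrite mem_DsetF_gstar => /andP [_ /gstarP [_ sB ->]].
by rewrite sB eqxx.
Qed.

Lemma mem_F1_old B : B \in F -> B \notin lost -> B \in F1.
Proof. by move=> FB lB; rewrite in_setD in_setU FB lB. Qed.

Lemma mem_F1_new E Y : E \in gstar i -> Y \subset high -> #|Y| = k - i + 1 ->
  [/\ #|E :\ sx :|: Y| = k, E :\ sx :|: Y \notin F, E :\ sx :|: Y \in F1 &
      (E :\ sx :|: Y) :&: low = E :\ sx].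
Proof.
move=> iE sY cY; have [gE sE cE] := gstarP iE.
have cEY : #|E :\ sx :|: Y| = k.
  rewrite cardsU_low_high ?g_setD1_low // cardsD1_in // cE cY.
  by move: i_gt0 i_le_k; clear; lia.
have tEY : (E :\ sx :|: Y) :&: low = E :\ sx by rewrite setUI_low ?g_setD1_low.
split=> //; first exact: setD1U_high_notin_F.
rewrite in_setD in_setU (mem_DsetF_gstar' iE sY cEY) orbT andbT.
by apply: notin_lost; rewrite tEY !inE eqxx.
Qed.

Lemma twin_member E Z d : E \in gstar i -> Z \subset high -> #|Z| = k - i -> d \in high :\: Z ->
  [/\ #|E :\ sx :|: Z :|: [set d]| = k, E :\ sx :|: Z :|: [set d] \notin F,
      E :\ sx :|: Z :|: [set d] \in F1 & (E :\ sx :|: Z :|: [set d]) :&: low = E :\ sx].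
Proof.
move=> iE sZ cZ; rewrite in_setD => /andP [dZ dh].
rewrite -setUA; apply: mem_F1_new => //; first by rewrite subUset sZ sub1set.
by rewrite cardsU1_notin // cZ addn1.
Qed.

Lemma twin_pair_new x : x \in twins_i ->
  [/\ twin_pair (fun E => E :\ sx) x \in adj_pairs k.-1 F1,
      twin_pair (fun E => E :\ sx) x \notin adj_pairs k.-1 kept &
      forall M, M \in twin_pair (fun E => E :\ sx) x -> M :&: low = x.1 :\ sx].
Proof.
case/twin_indexP=> E [Z [d1 [d2 [-> iE sZ cZ [ne_d d1h d2h]]]]].
rewrite /twin_pair /= imset_set2.
have [c1 n1 f1 t1] := twin_member iE sZ cZ d1h.
have [c2 n2 f2 t2] := twin_member iE sZ cZ d2h.
have [gE sE cE] := gstarP iE.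
split.
- apply: adj_pairs_in; rewrite ?prednK ?k_gt0 //.
  rewrite setIU1 // cardsU_low_high ?g_setD1_low // cardsD1_in // cE cZ.
  by move: i_gt0 i_le_k; clear; lia.
- apply/negP=> /adj_pairs_mem /(_ (set21 _ _)).
  by rewrite in_setD (negbTE n1) andbF.
- by move=> M; rewrite !inE => /orP [] /eqP ->.
Qed.

Lemma notin_setD1U_high E Z d : E \in g -> d \in high :\: Z -> d \notin E :\ sx :|: Z.
Proof.
move=> gE; rewrite in_setD => /andP [dZ dh]; rewrite in_setU negb_or dZ andbT.
by apply/negP=> /(subsetP (g_setD1_low sx gE)) dl; apply: low_high_disj dl dh.
Qed.

Lemma twin_pair_inj : {in twins_i &, injective (twin_pair (fun E => E :\ sx))}.
Proof.
move=> x1 x2 /twin_indexP [E1 [Z1 [a1 [b1 [-> iE1 sZ1 _ [ne1 a1h b1h]]]]]].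
move=> /twin_indexP [E2 [Z2 [a2 [b2 [-> iE2 sZ2 _ [ne2 a2h b2h]]]]]].
rewrite /twin_pair /= !imset_set2 => e.
have [gE1 sE1 _] := gstarP iE1; have [gE2 sE2 _] := gstarP iE2.
have eK : E1 :\ sx :|: Z1 = E2 :\ sx :|: Z2.
  move: (congr1 (fun P : {set {set 'I_n}} => \bigcap_(X in P) X) e).
  by rewrite /= !bigcap_set2 !setIU1.
have eD : [set a1; b1] = [set a2; b2].
  move: (congr1 (fun P : {set {set 'I_n}} => \bigcup_(X in P) X) e).
  rewrite /= !bigcup_set2 => e2.
  rewrite -(setUU1D (notin_setD1U_high gE1 a1h) (notin_setD1U_high gE1 b1h)) e2 eK.
  by rewrite setUU1D ?(notin_setD1U_high gE2).
have eE : E1 = E2.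
  apply: (setD1_inj sE1 sE2).
  by rewrite -(setUI_low (g_setD1_low _ gE1) sZ1) -(setUI_low (g_setD1_low _ gE2) sZ2) eK.
have eZ : Z1 = Z2.
  by rewrite -(setUI_high (g_setD1_low sx gE1) sZ1) -(setUI_high (g_setD1_low sx gE2) sZ2) eK.
by rewrite eE eZ eD.
Qed.

Lemma low_notin_setD1U_high E Y v : Y \subset high -> v \in low :\: (E :\ sx) ->
  v \notin E :\ sx :|: Y.
Proof.
move=> sY; rewrite in_setD => /andP [vE vl].
by rewrite in_setU negb_or vE /=; apply/negP=> /(subsetP sY); apply: low_high_disj vl.
Qed.

Lemma swap_trace E Y u v : E \in g -> Y \subset high -> u \in Y -> v \in low ->
  ((E :\ sx :|: Y) :\ u :|: [set v]) :&: low = E :\ sx :|: [set v].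
Proof.
move=> gE sY uY vl.
rewrite setIUl setIDAC setUI_low ?g_setD1_low // (setIidPl _) ?sub1set // setD1_notin //.
by apply/negP=> /(subsetP (g_setD1_low sx gE)) ul; apply: low_high_disj ul (subsetP sY u uY).
Qed.

(* If v = s the swapped set contains E; otherwise [mem_F_shifted_gen] applies. *)
Lemma swapped_member E Y u v : E \in gstar i -> Y \subset high -> #|Y| = k - i + 1 ->
  u \in Y -> v \in low :\: (E :\ sx) ->
  [/\ (E :\ sx :|: Y) :\ u :|: [set v] \in F1, #|(E :\ sx :|: Y) :\ u :|: [set v]| = k &
      #|((E :\ sx :|: Y) :\ u :|: [set v]) :&: low| = i].
Proof.
move=> iE sY cY uY vV; have vA := low_notin_setD1U_high sY vV.
move: vV; rewrite in_setD => /andP [vE vl].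
have [gE sE cE] := gstarP iE; have [cA _ _ _] := mem_F1_new iE sY cY.
have uA : u \in E :\ sx :|: Y by rewrite in_setU uY orbT.
have tB := swap_trace gE sY uY vl.
have ctB : #|((E :\ sx :|: Y) :\ u :|: [set v]) :&: low| = i.
  by rewrite tB cardsU1_notin // cardsD1_in // cE prednK.
have cB : #|(E :\ sx :|: Y) :\ u :|: [set v]| = k by rewrite cards_swap.
have sub : E :\ sx :|: [set v] \subset (E :\ sx :|: Y) :\ u :|: [set v] by rewrite -tB subsetIl.
split=> //; apply: mem_F1_old; last by apply: notin_lost; rewrite ctB eq_sym j_neq_i orbT.
case: (v =P sx) => [evs|/eqP v_s].
  by apply: (mem_F gE) => //; apply: subset_trans sub; rewrite evs setUC setD1K.
apply: (mem_F_shifted_gen gE sE vl v_s) => //.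
by apply: contra vE => vE; rewrite in_setD1 v_s.
Qed.

Lemma swap_pair_new x : x \in swaps_i ->
  [/\ swap_pair (fun E => E :\ sx) x \in adj_pairs k.-1 F1,
      swap_pair (fun E => E :\ sx) x \notin adj_pairs k.-1 kept,
      #|(x.1.1 :\ sx :|: x.1.2) :&: low| = i.-1 &
      #|((x.1.1 :\ sx :|: x.1.2) :\ x.2.1 :|: [set x.2.2]) :&: low| = i].
Proof.
case/swap_indexP=> E [Y [u [v [-> iE sY cY [uY vV]]]]]; rewrite /swap_pair /=.
have [cA nA fA tA] := mem_F1_new iE sY cY.
have [fB cB ctB] := swapped_member iE sY cY uY vV.
have [_ sE cE] := gstarP iE.
have vA := low_notin_setD1U_high sY vV.
split.
- apply: adj_pairs_in; rewrite ?prednK ?k_gt0 //.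
  by rewrite setI_swap // cardsD1_in ?cA // in_setU uY orbT.
- apply/negP=> /adj_pairs_mem /(_ (set21 _ _)).
  by rewrite in_setD (negbTE nA) andbF.
- by rewrite tA cardsD1_in // cE.
- exact: ctB.
Qed.

Lemma swap_pair_inj : {in swaps_i &, injective (swap_pair (fun E => E :\ sx))}.
Proof.
move=> x1 x2 x1S x2S.
have [_ _ ta1 tb1] := swap_pair_new x1S; have [_ _ ta2 tb2] := swap_pair_new x2S.
move: x1S x2S ta1 tb1 ta2 tb2 => /swap_indexP [E1 [Y1 [u1 [v1 [-> iE1 sY1 _ [uY1 vV1]]]]]].
move=> /swap_indexP [E2 [Y2 [u2 [v2 [-> iE2 sY2 _ [uY2 vV2]]]]]] /= ta1 tb1 ta2 tb2.
rewrite /swap_pair /= => e.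
have ne_t : #|(E1 :\ sx :|: Y1) :&: low| != #|((E1 :\ sx :|: Y1) :\ u1 :|: [set v1]) :&: low|.
  by rewrite ta1 tb1 ltn_eqF // ltn_predL.
have [eA eB] := eq_set2_sep (h := fun M => #|M :&: low|) e
  (etrans ta1 (esym ta2)) (etrans tb1 (esym tb2)) ne_t.
have [gE1 sE1 _] := gstarP iE1; have [gE2 sE2 _] := gstarP iE2.
have eE : E1 = E2.
  apply: (setD1_inj sE1 sE2).
  by rewrite -(setUI_low (g_setD1_low _ gE1) sY1) -(setUI_low (g_setD1_low _ gE2) sY2) eA.
have eY : Y1 = Y2.
  by rewrite -(setUI_high (g_setD1_low sx gE1) sY1) -(setUI_high (g_setD1_low sx gE2) sY2) eA.
subst E2 Y2.
have [-> ->] : u1 = u2 /\ v1 = v2.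
  apply: (swap_inj _ _ (low_notin_setD1U_high sY1 vV1) (low_notin_setD1U_high sY1 vV2) eB).
    by rewrite in_setU uY1 orbT.
  by rewrite in_setU uY2 orbT.
by [].
Qed.

(* Either E2 is itself a generator and the lift is new, or a generator E0 of A0 is a proper
   subset of E2 and the lift is in F, after shifting s down to a point of E2 \ E0 when
   s ∈ E0. *)
Lemma lift_mem_F_or_new E2 Y A0 : A0 \in F -> E2 = A0 :&: low -> sx \in E2 -> #|E2| = i ->
  Y \subset high -> #|E2 :\ sx :|: Y| = k -> E2 :\ sx :|: Y \in F :|: DsetF k (gstar_i' g i).
Proof.
move=> FA0 eE2 sE2 cE2 sY cB.
have [_ [E0 gE0 sE0A0]] := mem_F_gen FA0.
have sE0E2 : E0 \subset E2 by rewrite eE2 subsetI sE0A0 g_low.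
have sub : E2 :\ sx \subset E2 :\ sx :|: Y by apply: subsetUl.
case: (E0 =P E2) => [eE0|/eqP ne_E].
  apply/setUP; right; apply: mem_DsetF_gstar' => //.
  by rewrite inE -eE0 gE0 eE0 sE2 cE2 eqxx.
apply/setUP; left.
have [z zE2 zE0] : exists2 z, z \in E2 & z \notin E0.
  by apply/subsetPn; apply: contra ne_E => sE2E0; rewrite eqEsubset sE0E2.
have zl : z \in low by move: zE2; rewrite eE2 in_setI => /andP [].
case sE0: (sx \in E0).
  have z_s : z != sx by apply: contraNneq zE0 => ->.
  apply: (mem_F_shifted_gen gE0 sE0 zl z_s zE0 cB); apply: subset_trans sub.
  apply/subsetP=> y; rewrite !inE => /orP [/andP [ys yE0]|/eqP ->].
    by rewrite ys (subsetP sE0E2 y yE0).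
  by rewrite z_s zE2.
apply: (mem_F gE0 _ cB); apply: subset_trans sub; apply/subsetP=> y yE0.
by rewrite in_setD1 (subsetP sE0E2 y yE0) andbT; apply: contraNneq (negbT sE0) => <-.
Qed.

Lemma lift_pair_new x : x \in lifts_i ->
  [/\ lift_pair (fun E => E :\ sx) x \in adj_pairs k.-1 F1,
      lift_pair (fun E => E :\ sx) x \notin adj_pairs k.-1 kept,
      (forall M, M \in lift_pair (fun E => E :\ sx) x -> #|M :&: low| = i.-1) &
      exists M1 M2, [/\ M1 \in lift_pair (fun E => E :\ sx) x,
        M2 \in lift_pair (fun E => E :\ sx) x & M1 :&: low != M2 :&: low]].
Proof.
case: x => P Y; rewrite in_setX /= => /andP [tP]; rewrite inE => /andP [sY /eqP cY].
have [E [E2 [A0 [-> iE FA0 eE2 [cE' cE2' cEE2 sEE2]]]]] := trace_pairsP tP.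
rewrite /lift_pair /= imset_set2.
have [gE sE cE] := gstarP iE.
move: sEE2; rewrite in_setI => /andP [_ sE2].
have cE2 : #|E2| = i by rewrite cE2' prednK.
have sE2l : E2 :\ sx \subset low by apply: subset_trans (subD1set _ _) _; rewrite eE2 subsetIr.
have [cA nA fA tA] := mem_F1_new iE sY cY.
have cB : #|E2 :\ sx :|: Y| = k.
  rewrite cardsU_low_high // cardsD1_in // cE2 cY.
  by move: i_gt0 i_le_k; clear; lia.
have tB : (E2 :\ sx :|: Y) :&: low = E2 :\ sx by rewrite setUI_low.
have fB : E2 :\ sx :|: Y \in F1.
  rewrite in_setD (lift_mem_F_or_new FA0 eE2 sE2 cE2 sY cB) andbT.
  by apply: notin_lost; rewrite tB !inE eqxx.
have i_gt1 : 1 < i.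
  have : 0 < #|E :&: E2| by apply/card_gt0P; exists sx; rewrite in_setI sE.
  by rewrite cEE2 -subn1 subn_gt0.
split.
- apply: adj_pairs_in; rewrite ?prednK ?k_gt0 //.
  rewrite -setUIl -setDIl cardsU_low_high //; last first.
    by apply: subset_trans sE2l; apply: setSD; apply: subsetIr.
  rewrite cardsD1_in ?cEE2 ?cY; last by rewrite in_setI sE.
  by move: i_gt1 i_le_k; clear; lia.
- apply/negP=> /adj_pairs_mem /(_ (set21 _ _)).
  by rewrite in_setD (negbTE nA) andbF.
- by move=> M; rewrite !inE => /orP [] /eqP ->; rewrite ?tA ?tB cardsD1_in ?cE ?cE2.
- exists (E :\ sx :|: Y), (E2 :\ sx :|: Y); rewrite !inE !eqxx ?orbT; split=> //.
  rewrite tA tB; apply/negP=> /eqP /(setD1_inj sE sE2) eE.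
  by move: cEE2; rewrite -eE setIid cE => /eqP; rewrite gtn_eqF // ltn_predL.
Qed.

Lemma lift_imset_sub (P1 P2 : {set {set 'I_n}}) Y : Y \subset high ->
  (forall X, X \in P1 -> X \subset low /\ sx \in X) ->
  (forall X, X \in P2 -> X \subset low /\ sx \in X) ->
  [set X :\ sx :|: Y | X in P1] = [set X :\ sx :|: Y | X in P2] -> P1 \subset P2.
Proof.
move=> sY h1 h2 e; apply/subsetP=> X XP1.
have : X :\ sx :|: Y \in [set X :\ sx :|: Y | X in P2] by rewrite -e; apply: imset_f.
case/imsetP=> X' X'P2 eX.
have [sXl sX] := h1 X XP1; have [sX'l sX'] := h2 X' X'P2.
suff -> : X = X' by [].
apply: (setD1_inj sX sX').
by rewrite -(setUI_low (subset_trans (subD1set _ _) sXl) sY)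
           -(setUI_low (subset_trans (subD1set _ _) sX'l) sY) eX.
Qed.

Lemma lift_pair_inj : {in lifts_i &, injective (lift_pair (fun E => E :\ sx))}.
Proof.
move=> [P1 Y1] [P2 Y2]; rewrite !in_setX /= => /andP [tP1 qY1] /andP [tP2 qY2].
move: qY1 qY2; rewrite !inE => /andP [sY1 _] /andP [sY2 _]; rewrite /lift_pair /= => e.
have m1 := trace_pairs_mem tP1; have m2 := trace_pairs_mem tP2.
have [E [E2 [A0 [eP1 _ _ _ _]]]] := trace_pairsP tP1.
have EP1 : E \in P1 by rewrite eP1 set21.
have eY : Y1 = Y2.
  have : E :\ sx :|: Y1 \in [set X :\ sx :|: Y2 | X in P2] by rewrite -e; apply: imset_f.
  case/imsetP=> X' X'P2 eX.
  have [sEl _] := m1 E EP1; have [sX'l _] := m2 X' X'P2.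
  by rewrite -(setUI_high (subset_trans (subD1set _ sx) sEl) sY1)
             -(setUI_high (subset_trans (subD1set _ sx) sX'l) sY2) eX.
subst Y2; congr (_, _); apply/eqP; rewrite eqEsubset.
by rewrite (lift_imset_sub sY1 m1 m2 e) (lift_imset_sub sY1 m2 m1 (esym e)).
Qed.

Lemma card_gain :
  #|twins_i| + #|swaps_i| + #|lifts_i| <= #|adj_pairs k.-1 F1 :\: adj_pairs k.-1 kept|.
Proof.
set IA := twin_pair (fun E => E :\ sx) @: twins_i.
set IB := swap_pair (fun E => E :\ sx) @: swaps_i.
set IC := lift_pair (fun E => E :\ sx) @: lifts_i.
have i1_neq_i : i.-1 != i by rewrite ltn_eqF // ltn_predL.
have swap_big_trace Q : Q \in IB -> exists2 M, M \in Q & #|M :&: low| = i.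
  case/imsetP=> y yB ->; have [_ _ _ tB] := swap_pair_new yB.
  by exists ((y.1.1 :\ sx :|: y.1.2) :\ y.2.1 :|: [set y.2.2]); first exact: set22.
have dAB : IA :&: IB = set0.
  apply/setP=> Q; rewrite !inE.
  apply/negP=> /andP [/imsetP [x xA ->] /swap_big_trace [M MQ tM]].
  have [_ _ tA] := twin_pair_new xA; move: tM; rewrite (tA _ MQ).
  case/twin_indexP: xA => E [Z [d1 [d2 [-> /gstarP [_ sE cE] _ _ _]]]] /=.
  by rewrite cardsD1_in // cE; apply/eqP.
have dBC : IB :&: IC = set0.
  apply/setP=> Q; rewrite !inE.
  apply/negP=> /andP [/swap_big_trace [M MQ tM] /imsetP [y yC eQ]].
  have [_ _ tC _] := lift_pair_new yC.
  by rewrite eQ in MQ; move: tM; rewrite (tC _ MQ); apply/eqP.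
have dAC : IA :&: IC = set0.
  apply/setP=> Q; rewrite !inE; apply/negP=> /andP [/imsetP [x xA ->] /imsetP [y yC e]].
  have [_ _ tA] := twin_pair_new xA; have [_ _ _ [M1 [M2 [M1Q M2Q]]]] := lift_pair_new yC.
  by rewrite -e in M1Q M2Q; rewrite (tA _ M1Q) (tA _ M2Q) eqxx.
have sub : IA :|: IB :|: IC \subset adj_pairs k.-1 F1 :\: adj_pairs k.-1 kept.
  apply/subsetP=> Q; rewrite !in_setU => /orP [/orP [] |] /imsetP [x xI ->]; rewrite in_setD.
  - by have [-> -> _] := twin_pair_new xI.
  - by have [-> -> _ _] := swap_pair_new xI.
  - by have [-> -> _ _] := lift_pair_new xI.
apply: leq_trans (subset_leq_card sub).
rewrite !cardsU_setI0 ?setIUl ?dAC ?dBC ?setU0 //.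
by rewrite !card_in_imset //; [exact: lift_pair_inj | exact: swap_pair_inj | exact: twin_pair_inj].
Qed.

Local Notation twins_j := (twin_index (gstar j) (k - j - 1)).
Local Notation swaps_j :=
  (swap_index (gstar j) (k - j) (fun _ X => X :|: [set sx]) (fun E => low :\: E)).
Local Notation lifts_j := (lift_index (trace_pairs j.-1 (gstar j)) (k - j)).

Section LostPair.
Variables (A B : {set 'I_n}) (u v : 'I_n).
Hypotheses (jA : A :&: low \in gstar j) (cA : #|A| = k) (FB : B \in F).
Hypotheses (uA : u \in A) (vA : v \notin A) (eB : B = A :\ u :|: [set v]).

Local Notation E := (A :&: low).
Local Notation X := (A :&: high).

Lemma lost_high_card : #|X| = k - j.
Proof.
have [_ _ cE] := gstarP jA.
by move: cA; rewrite {1}[A]low_high_split cardsU_low_high ?subsetIr // cE => <-; rewrite addKn.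
Qed.

Lemma lost_high_sets : X \in high_sets (k - j).
Proof. by rewrite inE subsetIr lost_high_card eqxx. Qed.

Lemma lost_pair_swap : u \in X :|: [set sx] -> v \in low -> [set A; B] \in swap_pair id @: swaps_j.
Proof.
move=> uX vl; apply/imsetP; exists ((E, X), (u, v)).
  by rewrite inE /= jA lost_high_sets uX in_setD vl in_setI (negbTE vA).
by rewrite /swap_pair /= -low_high_split eB.
Qed.

(* Moving a low element of A up would leave B with a generator strictly inside E. *)
Lemma lost_pair_low_up : u \in low -> v \in low.
Proof.
move=> ul; apply: contraT => vh.
have [gE _ _] := gstarP jA; have [_ [E0 gE0 sE0B]] := mem_F_gen FB.
have sE0 : E0 \subset E :\ u.
  apply/subsetP=> y yE0; have yl := subsetP (g_low gE0) y yE0.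
  move: (subsetP sE0B y yE0); rewrite eB in_setU in_set1 in_setD1 => /orP [/andP [yu yA]|/eqP eyv].
    by rewrite in_setD1 yu in_setI yA yl.
  by move: vh; rewrite -eyv yl.
have eE0 : E0 = E by apply: g_antichain => //; apply: subset_trans sE0 (subD1set _ _).
by move: sE0; rewrite eE0 => /subsetP /(_ u); rewrite in_setD1 eqxx in_setI uA ul => /(_ isT).
Qed.

Lemma lost_pair_lift : u \in low -> u != sx -> v \in low -> [set A; B] \in lift_pair id @: lifts_j.
Proof.
move=> ul u_s vl; have [gE sE cE] := gstarP jA.
have uE : u \in E by rewrite in_setI uA ul.
have vE : v \notin E by rewrite in_setI (negbTE vA).
have tB : B :&: low = E :\ u :|: [set v].
  apply/setP=> y; rewrite eB !in_setI !in_setU !in_setD1 !in_set1 in_setI.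
  by case: (y =P v) => [->|_]; rewrite ?vl ?orbT ?andbT // !orbF andbA.
have hB : B :&: high = X.
  apply/setP=> y; rewrite eB !in_setI !in_setU !in_setD1 !in_set1.
  case yh: (y \in high); rewrite ?andbF ?andbT //.
  have [yu yv] : y != u /\ y != v.
    by split; apply/eqP=> ey; move: yh; rewrite ey in_setC ?ul ?vl.
  by rewrite yu (negbTE yv) orbF.
have j_gt0 : 0 < j by rewrite -cE; apply/card_gt0P; exists sx.
apply/imsetP; exists ([set E; B :&: low], X); last first.
  by rewrite /lift_pair /= imset_set2 -low_high_split -hB -low_high_split.
rewrite in_setX lost_high_sets andbT inE.
apply/exists_inP; exists E => //; apply/exists_inP; exists (B :&: low); first exact: imset_f.
rewrite prednK // cE eqxx tB cards_swap // cE eqxx setI_swap // cardsD1_in // cE eqxx.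
by rewrite memlab_lab in_setD1 sE andbT eqxx (eq_sym sx) u_s.
Qed.

Lemma lost_pair_twin : u \in high -> v \in high ->
  j < k /\ [set A; B] \in twin_pair id @: twins_j.
Proof.
move=> uh vh; have [gE sE cE] := gstarP jA.
have uX : u \in X by rewrite in_setI uA uh.
have uE : u \notin E by rewrite in_setI uA /=; apply/negP=> ul; apply: low_high_disj ul uh.
split.
  have : 0 < #|X| by apply/card_gt0P; exists u.
  by rewrite lost_high_card subn_gt0.
apply/imsetP; exists (E, (X :\ u, [set u; v])).
  have uv : u != v by apply: contraNneq vA => <-.
  have qXu : X :\ u \in high_sets (k - j - 1).
    rewrite inE (subset_trans (subD1set _ _) (subsetIr _ _)) (cardsD1_in uX).
    by rewrite lost_high_card subn1 eqxx.
  have sD : [set u; v] \subset high :\: (X :\ u).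
    apply/subsetP=> y /set2P [] ->; rewrite in_setD in_setD1 ?eqxx ?uh ?vh //.
    by rewrite in_setI (negbTE vA) andbF.
  by rewrite inE /= jA qXu sD cards2 uv.
rewrite /twin_pair /= imset_set2 /=.
have -> : E :|: X :\ u = A :\ u.
  by rewrite [in RHS](low_high_split A) setDUl (setD1_notin uE).
by rewrite eB (setUC _ [set u]) setD1K.
Qed.
End LostPair.

Lemma lost_pair_cover A B : A \in lost -> B \in F -> #|A| = k -> #|B| = k -> #|A :&: B| = k.-1 ->
  [set A; B] \in (if j < k then twin_pair id @: twins_j else set0)
                 :|: swap_pair id @: swaps_j :|: lift_pair id @: lifts_j.
Proof.
move=> lA FB cA cB cAB; rewrite -(prednK k_gt0) in cA cB.
have [u [v [uA _ _ vA eB]]] := adjacent_swap cA cB cAB.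
rewrite (prednK k_gt0) in cA.
have jA : A :&: low \in gstar j by move: lA; rewrite mem_DsetF_gstar => /andP [].
case ul: (u \in low).
  have vl := lost_pair_low_up jA FB uA eB ul.
  case: (u =P sx) => [eus|/eqP u_s].
    have uX : u \in A :&: high :|: [set sx] by rewrite eus in_setU set11 orbT.
    by rewrite !in_setU (lost_pair_swap jA cA vA eB uX vl) orbT.
  by rewrite in_setU (lost_pair_lift jA cA FB uA vA eB ul u_s vl) orbT.
have uh : u \in high by rewrite in_setC ul.
case vl: (v \in low).
  have uX : u \in A :&: high :|: [set sx] by rewrite in_setU in_setI uA uh.
  by rewrite !in_setU (lost_pair_swap jA cA vA eB uX vl) orbT.
have vh : v \in high by rewrite in_setC vl.
have [j_lt_k tw] := lost_pair_twin jA cA uA vA eB uh vh.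
by rewrite j_lt_k !in_setU tw.
Qed.

Lemma card_loss : #|adj_pairs k.-1 F :\: adj_pairs k.-1 kept| <=
  (if j < k then #|twins_j| else 0) + #|swaps_j| + #|lifts_j|.
Proof.
set LA := if j < k then twin_pair id @: twins_j else set0.
have sub : adj_pairs k.-1 F :\: adj_pairs k.-1 kept
           \subset LA :|: swap_pair id @: swaps_j :|: lift_pair id @: lifts_j.
  apply/subsetP=> P; rewrite in_setD => /andP [nP /adj_pairsP [A [B [FA FB eP cA [cB cAB]]]]].
  rewrite prednK ?k_gt0 // in cA cB; rewrite eP.
  case lA: (A \in lost); first exact: lost_pair_cover.
  case lB: (B \in lost); first by rewrite setUC; apply: lost_pair_cover; rewrite // setIC.
  move: nP; rewrite eP adj_pairs_in ?prednK ?k_gt0 //.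
    by rewrite in_setD lA.
  by rewrite in_setD lB.
apply: leq_trans (subset_leq_card sub) _.
apply: leq_trans (leq_card_setU _ _) _; apply: leq_add; last exact: leq_imset_card.
apply: leq_trans (leq_card_setU _ _) _; apply: leq_add; last exact: leq_imset_card.
by rewrite /LA; case: ifP => _; rewrite ?cards0 ?leq_imset_card.
Qed.

Lemma zeta_diff_ge :
  ((#|twins_i| + #|swaps_i| + #|lifts_i|)%N%:Z
     - ((if j < k then #|twins_j| else 0) + #|swaps_j| + #|lifts_j|)%N%:Z
   <= (zeta k.-1 F1 F1)%:Z - (zeta k.-1 F F)%:Z)%R.
Proof.
have sF1 : adj_pairs k.-1 kept \subset adj_pairs k.-1 F1.
  by apply: adj_pairsS; apply/subsetP=> A; rewrite !in_setD in_setU => /andP [-> ->].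
have sF : adj_pairs k.-1 kept \subset adj_pairs k.-1 F by apply/adj_pairsS/subsetDl.
rewrite !zetaE -(cardsID (adj_pairs k.-1 kept) (adj_pairs k.-1 F1)) (setIidPr sF1).
rewrite -(cardsID (adj_pairs k.-1 kept) (adj_pairs k.-1 F)) (setIidPr sF).
exact: ler_subz_add2l card_gain card_loss.
Qed.

Lemma gstar_card_le_s i' E : E \in gstar i' -> i' <= s.
Proof. by case/gstarP=> gE _ <-; rewrite -card_low subset_leq_card ?g_low. Qed.

Lemma card_twins_i : #|twins_i| = #|gstar i| * 'C(n - s, k - i) * 'C(n - s + i - k, 2).
Proof. by rewrite card_twin_index bin_mul_bin_subn // mulnA. Qed.

Lemma card_swaps_i :
  #|swaps_i| = #|gstar i| * (s - i + 1) * (k - i + 1) * 'C(n - s, k - i + 1).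
Proof.
rewrite (card_swap_index (cu := k - i + 1) (cv := s - i + 1)).
- by rewrite -!mulnA; congr (_ * _); rewrite mulnC -mulnA mulnCA.
- by move=> E Y _; rewrite inE => /andP [_ /eqP].
move=> E iE; have [gE sE cE] := gstarP iE.
rewrite cardsD (setIidPr (g_setD1_low _ gE)) card_low cardsD1_in // cE.
by have := gstar_card_le_s iE; move: i_gt0; clear; lia.
Qed.

Lemma card_lifts_i : #|lifts_i| = zetav i.-1 s (gstar i) (restr F s) * 'C(n - s, k - i + 1).
Proof. by rewrite card_lift_index zetavE. Qed.

Lemma card_twins_j : (if j < k then #|twins_j| else 0) =
  #|gstar j| * binz (n - s) ((k - j)%:Z - 1) * 'C(n - s + j + 1 - k, 2).
Proof.
case: ltnP => [lt_jk|le_kj].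
  have -> : ((k - j)%:Z - 1 = (k - j - 1)%N%:Z)%R by rewrite subzn // subn_gt0.
  by rewrite card_twin_index /binz -(subnDA j k 1) bin_mul_bin_subn ?addn1 // addnS mulnA.
have /eqP -> : k - j == 0 by rewrite subn_eq0.
by rewrite muln0 mul0n.
Qed.

Lemma card_swaps_j : #|swaps_j| = #|gstar j| * 'C(n - s, k - j) * ((k - j + 1) * (s - j)).
Proof.
apply: card_swap_index => [E X _|E jE].
  rewrite inE => /andP [sX /eqP cX]; rewrite cardsU1_notin ?cX ?addn1 //.
  by apply/negP=> /(subsetP sX); apply: low_high_disj; rewrite in_low.
have [gE _ cE] := gstarP jE.
by rewrite cardsD (setIidPr (g_low gE)) card_low cE.
Qed.

Lemma card_loss_terms :
  (((if j < k then #|twins_j| else 0) + #|swaps_j| + #|lifts_j|)%N%:Z =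
    (#|gstar j| * binz (n - s) (k%:Z - j%:Z - 1) * 'C(n - s + j + 1 - k, 2))%N%:Z
    + (zetav j.-1 s (gstar j) (restr F s) * binz (n - s) (k%:Z - j%:Z))%N%:Z
    + #|gstar j|%:Z * (s%:Z - j%:Z) * (k%:Z - j%:Z + 1) * (binz (n - s) (k%:Z - j%:Z))%:Z)%R.
Proof.
rewrite card_twins_j card_swaps_j card_lift_index zetavE.
case: (set_0Vmem (gstar j)) => [e0|[E jE]].
  have -> : trace_pairs j.-1 (gstar j) = set0.
    by apply/setP=> P; rewrite inE e0 in_set0; apply/negbTE/exists_inP => -[A]; rewrite in_set0.
  by rewrite e0 !cards0 !mul0n !mul0r.
have [gE sE cE] := gstarP jE.
have le_jk : j <= k by rewrite -cE g_card_le.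
have le_js := gstar_card_le_s jE.
rewrite (subzn le_jk) (subzn le_js) binz_nat.
move: (binz (n - s) _) 'C(n - s + j + 1 - k, 2) 'C(n - s, k - j).
move: #|gstar j| #|trace_pairs j.-1 (gstar j)| (k - j) (s - j).
by clear; lia.
Qed.

Theorem zeta_diff_bound :
  ((zeta k.-1 F1 F1)%:Z - (zeta k.-1 F F)%:Z >=
      (#|gstar i| * 'C(n - s, k - i) * 'C(n - s + i - k, 2))%N%:Z
    + (zetav i.-1 s (gstar i) (restr F s) * 'C(n - s, k - i + 1))%N%:Z
    + (#|gstar i| * (s - i + 1) * (k - i + 1) * 'C(n - s, k - i + 1))%N%:Z
    - (#|gstar j| * binz (n - s) (k%:Z - j%:Z - 1) * 'C(n - s + j + 1 - k, 2))%N%:Z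
    - (zetav j.-1 s (gstar j) (restr F s) * binz (n - s) (k%:Z - j%:Z))%N%:Z
    - (#|gstar j|%:Z * (s%:Z - j%:Z) * (k%:Z - j%:Z + 1)
         * (binz (n - s) (k%:Z - j%:Z))%:Z))%R.
Proof.
apply: le_trans zeta_diff_ge; rewrite card_loss_terms card_twins_i card_swaps_i card_lifts_i.
by rewrite -!addrA !opprD !PoszD -!addrA lerD2l addrCA.
Qed.
End Estimate.
End Family.
End Traces.

Section FromDefinitions.
Variables (n k : nat) (F g : {set {set 'I_n}}).

Lemma left_compressed_shift : left_compressed F -> forall A (a b : 'I_n),
  A \in F -> a < b -> b \in A -> a \notin A -> A :\ b :|: [set a] \in F.
Proof.
move=> lcF A a b FA lt_ab bA aA.
have : delta F a b A \in Delta a b F by apply: imset_f.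
by rewrite lcF // /delta bA aA /=; case: ifP => // /negbFE.
Qed.

Lemma is_gen_mem : is_gen k F g -> forall A,
  (A \in F) = (#|A| == k) && [exists E in g, E \subset A].
Proof. by case=> _ <- A; rewrite inE. Qed.

Lemma minimal_antichain : g = minimal_elts g ->
  forall E E', E \in g -> E' \in g -> E' \subset E -> E' = E.
Proof.
move=> gmin E E' gE gE' sE'E; move: gE; rewrite gmin inE => /andP [_ /forall_inP minE].
by apply/eqP; exact: implyP (minE E' gE') sE'E.
Qed.

Lemma sub_initseg_splusF E : E \in g -> E \subset initseg n (splusF g).
Proof.
move=> gE; apply/subsetP=> y yE; rewrite inE.
exact: leq_trans (splus_ub yE) (leq_bigmax_cond _ gE).
Qed.

Lemma gstar_iP i E : E \in gstar_i g i ->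
  [/\ E \in g, #|E| = i & exists2 sx : 'I_n, sx \in E & lab sx = splusF g].
Proof.
rewrite inE => /andP [gE /andP [/exists_inP [sx sE /eqP lab_sx] /eqP cE]].
by split=> //; exists sx.
Qed.
End FromDefinitions.

Local Open Scope ring_scope.

Theorem lemma3p2 (n k t i : nat) (F g : {set {set 'I_n}}) :
  uniform k F -> t_intersecting t F -> left_compressed F ->
  in_Gstar k F g ->
  gstar_i g i != set0 ->
  let s := splusF g in
  let j := (s + t - i)%N in
  j != i ->
  let F1 := (F :|: DsetF k (gstar_i' g i)) :\: DsetF k (gstar_i g j) in
  (zeta k.-1 F1 F1)%:Z - (zeta k.-1 F F)%:Z >=
      (#|gstar_i g i| * 'C(n - s, k - i) * 'C(n - s + i - k, 2))%:Z
    + (zetav i.-1 s (gstar_i g i) (restr F s) * 'C(n - s, k - i + 1))%:Z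
    + (#|gstar_i g i| * (s - i + 1) * (k - i + 1) * 'C(n - s, k - i + 1))%:Z
    - (#|gstar_i g j| * binz (n - s) (k%:Z - j%:Z - 1) * 'C(n - s + j + 1 - k, 2))%:Z
    - (zetav j.-1 s (gstar_i g j) (restr F s) * binz (n - s) (k%:Z - j%:Z))%:Z
    - (#|gstar_i g j|%:Z * (s%:Z - j%:Z) * (k%:Z - j%:Z + 1)
         * (binz (n - s) (k%:Z - j%:Z))%:Z).
Proof.
move=> _ _ lcF [[g_card_le g_upk] [g_min _]] /set0Pn [E iE] s j j_neq_i; cbv zeta.
have [gE cE [sx sE lab_sx]] := gstar_iP iE.
have i_gt0 : (0 < i)%N by rewrite -cE; apply/card_gt0P; exists sx.
have i_le_k : (i <= k)%N by rewrite -cE g_card_le.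
have g_low : forall E', E' \in g -> E' \subset initseg n (lab sx).
  by move=> E' gE'; rewrite lab_sx; apply: sub_initseg_splusF.
rewrite /j /s -lab_sx in j_neq_i *.
rewrite !(gstar_iE (esym lab_sx)).
exact: (zeta_diff_bound (is_gen_mem (conj g_card_le g_upk)) (minimal_antichain g_min) g_low
  (left_compressed_shift lcF) (esym lab_sx) j_neq_i i_gt0 i_le_k g_card_le).
Qed.
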